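(* Let $h,g_1,g_2>0$ be reals and for $\Delta>0$ define (logarithms base $2$, $[x]^+=\max\{x,0\}$) $$I_1(\Delta)=\log\Big(1+\frac{h^2}{1+\Delta}+g_2^2\Big),\quad I_2(\Delta)=\log(1+g_1^2+g_2^2)-\log\frac{1+\Delta}{\Delta},\quad R_{\mathrm{QMF}}(\Delta)=[\min\{I_1(\Delta),I_2(\Delta)\}]^+.$$ Then $\Delta^*=\frac{1+h^2+g_2^2}{g_1^2}$ maximizes $R_{\mathrm{QMF}}(\Delta)$ over $\Delta>0$, and it is the solution of $I_1(\Delta)=I_2(\Delta)$.
   Context: $R_{\mathrm{QMF}}(\Delta)$ is the quantize-map-and-forward rate of the full-duplex Gaussian single-relay channel ($Y_r=\mathsf hX+Z_r$, $Y=\mathsf g_1X_r+\mathsf g_2X+Z$, unit powers, unit noise, $h=|\mathsf h|$, $g_i=|\mathsf g_i|$) when the relay uses a Gaussian vector quantizer $\hat Y_r=Y_r+\hat Z_r$, $\hat Z_r\sim\mathcal{CN}(0,\Delta)$; this is the optimal quantizer when the relay knows all channel magnitudes. *)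

From Stdlib Require Import Reals.
Open Scope R_scope.

Definition log2 (x : R) : R := ln x / ln 2.

Definition pos_part (x : R) : R := Rmax x 0.

Definition I1 (h g2 D : R) : R := log2 (1 + h ^ 2 / (1 + D) + g2 ^ 2).

Definition I2 (g1 g2 D : R) : R :=
  log2 (1 + g1 ^ 2 + g2 ^ 2) - log2 ((1 + D) / D).

Definition R_QMF (h g1 g2 D : R) : R := pos_part (Rmin (I1 h g2 D) (I2 g1 g2 D)).

Definition Delta_star (h g1 g2 : R) : R := (1 + h ^ 2 + g2 ^ 2) / g1 ^ 2.

(** Both arguments of the logarithms, multiplied by [1 + Δ], are affine in
    [Δ], and their difference is [1 + h^2 + g2^2 - g1^2 Δ]: the two curves
    cross exactly once, at [Δ*].  Since [I1] is nonincreasing and [I2]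
    nondecreasing, the minimum of the two is largest at the crossing, and
    taking the positive part preserves this. *)
From Stdlib Require Import Reals Lra.
Open Scope R_scope.

Lemma ln2_pos : 0 < ln 2.
Proof. pose proof ln_lt_2; lra. Qed.

Lemma log2_le x y : 0 < x -> x <= y -> log2 x <= log2 y.
Proof.
  intros Hx [Hxy | ->]; [| lra].
  unfold log2, Rdiv. apply Rmult_le_compat_r.
  - left. apply Rinv_0_lt_compat, ln2_pos.
  - left. now apply ln_increasing.
Qed.

Lemma log2_inj x y : 0 < x -> 0 < y -> log2 x = log2 y -> x = y.
Proof.
  intros Hx Hy Hxy. apply ln_inv; auto.
  unfold log2 in Hxy. pose proof ln2_pos.
  apply (Rmult_eq_reg_r (/ ln 2)); [exact Hxy |].
  apply Rinv_neq_0_compat; lra.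
Qed.

Lemma Rmin_le_at_crossing (P : R -> Prop) (f g : R -> R) (s : R) :
  (forall x y, P x -> P y -> x <= y -> f y <= f x) ->
  (forall x y, P x -> P y -> x <= y -> g x <= g y) ->
  P s -> f s = g s ->
  forall x, P x -> Rmin (f x) (g x) <= Rmin (f s) (g s).
Proof.
  intros f_decr g_incr Ps fs_gs x Px.
  rewrite fs_gs, (Rmin_left (g s)) by lra.
  destruct (Rle_dec s x) as [Hsx | Hxs].
  - apply (Rle_trans _ (f x)); [apply Rmin_l |].
    rewrite <- fs_gs. now apply f_decr.
  - apply (Rle_trans _ (g x)); [apply Rmin_r |].
    apply g_incr; auto; lra.
Qed.

Lemma I1_arg_pos h g2 D : 0 <= D -> 0 < 1 + h ^ 2 / (1 + D) + g2 ^ 2.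
Proof.
  intros HD.
  assert (0 <= h ^ 2 / (1 + D)) by (apply Rmult_le_pos; [nra | left; apply Rinv_0_lt_compat; lra]).
  nra.
Qed.

Lemma I1_nonincreasing h g2 D D' : 0 <= D -> D <= D' -> I1 h g2 D' <= I1 h g2 D.
Proof.
  intros HD HDD'. unfold I1.
  apply log2_le; [apply I1_arg_pos; lra |].
  apply Rplus_le_compat_r, Rplus_le_compat_l.
  unfold Rdiv. apply Rmult_le_compat_l; [nra |].
  apply Rinv_le_contravar; lra.
Qed.

Lemma I2_log2_form g1 g2 D : 0 < D ->
  I2 g1 g2 D = log2 ((1 + g1 ^ 2 + g2 ^ 2) * D / (1 + D)).
Proof.
  intros HD. unfold I2, log2.
  assert (Hc : 0 < 1 + g1 ^ 2 + g2 ^ 2) by nra.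
  assert (HD' : 0 < (1 + D) / D) by (apply Rdiv_lt_0_compat; lra).
  replace ((1 + g1 ^ 2 + g2 ^ 2) * D / (1 + D))
    with ((1 + g1 ^ 2 + g2 ^ 2) * / ((1 + D) / D)) by (field; lra).
  rewrite ln_mult, ln_Rinv by auto using Rinv_0_lt_compat.
  pose proof ln2_pos. field; lra.
Qed.

Lemma I2_nondecreasing g1 g2 D D' : 0 < D -> D <= D' -> I2 g1 g2 D <= I2 g1 g2 D'.
Proof.
  intros HD HDD'. rewrite !I2_log2_form by lra.
  assert (Hc : 0 < 1 + g1 ^ 2 + g2 ^ 2) by nra.
  apply log2_le; [apply Rdiv_lt_0_compat; nra |].
  apply (Rmult_le_reg_r ((1 + D) * (1 + D'))); [nra |].
  field_simplify; nra.
Qed.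

Lemma I1_arg_sub_I2_arg h g1 g2 D : 0 <= D ->
  (1 + h ^ 2 / (1 + D) + g2 ^ 2) - (1 + g1 ^ 2 + g2 ^ 2) * D / (1 + D)
  = (1 + h ^ 2 + g2 ^ 2 - g1 ^ 2 * D) / (1 + D).
Proof. intros HD. field; lra. Qed.

Lemma I1_eq_I2_iff h g1 g2 D : 0 < D ->
  I1 h g2 D = I2 g1 g2 D <-> g1 ^ 2 * D = 1 + h ^ 2 + g2 ^ 2.
Proof.
  intros HD. unfold I1. rewrite I2_log2_form by exact HD.
  pose proof (I1_arg_sub_I2_arg h g1 g2 D (Rlt_le _ _ HD)) as Hgap.
  split.
  - intros Heq. apply log2_inj in Heq.
    + rewrite Heq, Rminus_diag in Hgap.
      assert (Hnum : 0 = (1 + h ^ 2 + g2 ^ 2 - g1 ^ 2 * D) / (1 + D) * (1 + D))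
        by (rewrite <- Hgap; ring).
      field_simplify in Hnum; lra.
    + apply I1_arg_pos; lra.
    + apply Rdiv_lt_0_compat; nra.
  - intros Hcross. f_equal.
    apply Rminus_diag_uniq. rewrite Hgap, <- Hcross.
    unfold Rdiv. ring.
Qed.

Lemma Delta_star_pos h g1 g2 : 0 < g1 -> 0 < Delta_star h g1 g2.
Proof. intros Hg1. unfold Delta_star. apply Rdiv_lt_0_compat; nra. Qed.

Lemma Delta_star_crossing h g1 g2 : 0 < g1 ->
  g1 ^ 2 * Delta_star h g1 g2 = 1 + h ^ 2 + g2 ^ 2.
Proof. intros Hg1. unfold Delta_star. field. nra. Qed.

Theorem mainTheorem8 (h g1 g2 : R) (hh : 0 < h) (hg1 : 0 < g1) (hg2 : 0 < g2) :
  0 < Delta_star h g1 g2 /\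
  (forall D : R, 0 < D -> R_QMF h g1 g2 D <= R_QMF h g1 g2 (Delta_star h g1 g2)) /\
  I1 h g2 (Delta_star h g1 g2) = I2 g1 g2 (Delta_star h g1 g2) /\
  (forall D : R, 0 < D -> I1 h g2 D = I2 g1 g2 D -> D = Delta_star h g1 g2).
Proof.
  pose proof (Delta_star_pos h g1 g2 hg1) as Hpos.
  assert (Hcross : I1 h g2 (Delta_star h g1 g2) = I2 g1 g2 (Delta_star h g1 g2))
    by (apply I1_eq_I2_iff; auto using Delta_star_crossing).
  repeat split; auto.
  - intros D HD. unfold R_QMF, pos_part. apply Rle_max_compat_r.
    apply (Rmin_le_at_crossing (fun x => 0 < x)); auto.
    + intros x y Hx _ Hxy. apply I1_nonincreasing; lra.
    + intros x y Hx _ Hxy. now apply I2_nondecreasing.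
  - intros D HD Heq. apply I1_eq_I2_iff in Heq; auto.
    apply (Rmult_eq_reg_l (g1 ^ 2)); [| nra].
    now rewrite Heq, Delta_star_crossing.
Qed.
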